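(* Let $\ell\ge 2$, $K\ge 1$ and $C_0>0$. There is a constant $M=M(K,\ell,C_0)$ such that the following holds. Let $G$ be a bipartite $n$-vertex graph containing no copy of $C_{2\ell}^{\square}$, with average degree $d\ge C_0n^{1/2}$ and maximum degree at most $Kd$, and let $uv\in E(G)$. Then the number of rich $4$-tuples $(w,z,w',z')$ such that $uz,uz',vw,vw'\in E(G)$ and $d(u,w),d(u,w'),d(v,z),d(v,z')\le C_0d^{1/2}$ is at most $Md^2$.
   Context: $d(a,b)$ denotes the number of common neighbours of $a,b$. For distinct vertices $w,z,w',z'$, the $4$-tuple $(w,z,w',z')$ is rich if $wz,w'z'\in E(G)$ and there are at least $4\ell$ pairwise vertex-disjoint edges $xy\in E(G)$ with $wx,xw',zy,yz'\in E(G)$. $C_{2\ell}^{\square}$ consists of two vertex-disjoint $2\ell$-cycles $a_1\cdots a_{2\ell}a_1$, $b_1\cdots b_{2\ell}b_1$ plus the edges $a_ib_i$. *)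

From HB Require Import structures.
From mathcomp Require Import all_boot all_order all_algebra.
From mathcomp Require Import Rstruct.
From Stdlib Require Rdefinitions.
Set Implicit Arguments. Unset Strict Implicit. Unset Printing Implicit Defensive.
Import Order.TTheory GRing.Theory Num.Theory.

Local Open Scope ring_scope.

Section Graphs.
Variable T : finType.
Variable e : rel T.

Definition simple_graph : Prop := symmetric e /\ irreflexive e.

Definition bipartite : Prop :=
  exists f : T -> bool, forall x y, e x y -> f x != f y.

Definition deg (x : T) : nat := #|[set y | e x y]|.

Definition avg_deg : Rdefinitions.R :=
  (\sum_(x : T) deg x)%:R / (#|T|)%:R.

Definition codeg (a b : T) : nat := #|[set c | e a c && e b c]|.

(* G contains a (not necessarily induced) copy of C_{2l}^square:
   two vertex-disjoint 2l-cycles a_0..a_{2l-1}, b_0..b_{2l-1} plus edges a_i b_i;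
   all 4l vertices distinct. *)
Definition has_prism (l : nat) : Prop :=
  exists a b : nat -> T,
    [/\ (forall i j : nat, (i < 2 * l)%N -> (j < 2 * l)%N -> a i = a j -> i = j),
        (forall i j : nat, (i < 2 * l)%N -> (j < 2 * l)%N -> b i = b j -> i = j),
        (forall i j : nat, (i < 2 * l)%N -> (j < 2 * l)%N -> a i != b j),
        (forall i : nat, (i < 2 * l)%N -> e (a i) (b i)) &
      (forall i : nat, (i < 2 * l)%N ->
         e (a i) (a ((i.+1) %% (2 * l))%N) /\ e (b i) (b ((i.+1) %% (2 * l))%N))].

Definition rich (l : nat) (w z w' z' : T) : bool :=
  [&& uniq [:: w; z; w'; z'], e w z, e w' z' &
   [exists S : {set T * T},
      [&& (4 * l <= #|S|)%N,
          [forall p in S,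
             [&& e p.1 p.2, e w p.1, e p.1 w', e z p.2 & e p.2 z']] &
          [forall p in S, forall q in S,
             (p != q) ==> [&& p.1 != q.1, p.1 != q.2, p.2 != q.1 & p.2 != q.2]]]]].

Definition counted_tuples (l : nat) (C0 : Rdefinitions.R) (u v : T)
  : {set T * T * T * T} :=
  [set t : T * T * T * T |
     let: (w, z, w', z') := t in
     [&& rich l w z w' z',
         e u z, e u z', e v w, e v w',
         (codeg u w)%:R <= C0 * Num.sqrt avg_deg,
         (codeg u w')%:R <= C0 * Num.sqrt avg_deg,
         (codeg v z)%:R <= C0 * Num.sqrt avg_deg &
         (codeg v z')%:R <= C0 * Num.sqrt avg_deg]].

End Graphs.

(* Put N = C0 d^(1/2), where d is the average degree, and let D = K d bound
   all degrees.  A counted 4-tuple (w,z,w',z') splits into two pairs (w,z)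
   and (w',z'), edges with w ~ v, z ~ u and d(u,w), d(v,z) <= N.
   - Degenerate tuples, with w or w' equal to u or z or z' equal to v, force
     deg u = d(u,u) <= N (resp. deg v <= N); each of the four kinds lies in a
     box with at most N^2 D elements.
   - Otherwise both halves are "good pairs", joined by a rich link.  Good
     pairs with a fixed vertex number at most N, so there are <= D N of them.
     If some nonempty set of good pairs had all rich-link degrees > 2lN
     inside it, we could walk a path of l good pairs with distinct vertices,
     join consecutive ones greedily by vertex-disjoint links (richness gives
     4l candidates), and together with uv obtain a copy of C_{2l}^square.
     Hence, by the degeneracy lemma, there are <= 2 (2lN) D N rich links.
   In total at most (4 + 4l) N^2 D = (4 + 4l) K C0^2 d^2 tuples are counted. *)

From mathcomp Require Import all_boot all_order all_algebra.
From mathcomp Require Import Rstruct.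
From mathcomp Require Import ring lra zify.
From Stdlib Require Rdefinitions.
Import Order.TTheory GRing.Theory Num.Theory.
Local Open Scope ring_scope.
Set Implicit Arguments. Unset Strict Implicit.

Local Notation RR := Rdefinitions.R.

Section Degeneracy.
Variables (Q : finType) (R : rel Q) (D : RR).
Hypothesis R_sym : symmetric R.

Definition adjacent_pairs (P : {set Q}) : {set Q * Q} :=
  [set pq in setX P P | R pq.1 pq.2].

Definition nbhd_in (S : {set Q}) (p : Q) : {set Q} := [set q in S | R p q].

Lemma card_adjacent_pairs_del (P : {set Q}) (p : Q) :
  (#|adjacent_pairs P| <= #|adjacent_pairs (P :\ p)| + 2 * #|nbhd_in P p|)%N.
Proof.
have cover : adjacent_pairs P \subset
    (adjacent_pairs (P :\ p) :|: [set (p, q) | q in nbhd_in P p])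
      :|: [set (q, p) | q in nbhd_in P p].
  apply/subsetP => -[x y]; rewrite !inE /=.
  have [-> /andP [/andP [_ yP] Rpy]|xp] := eqVneq x p.
    by rewrite (imset_f (pair p)) ?orbT // inE yP Rpy.
  have [-> /andP [/andP [xP _] Rxp]|yp /andP [/andP [xP yP] Rxy]] := eqVneq y p.
    by rewrite (imset_f (fun q => (q, p))) ?orbT // inE xP R_sym Rxp.
  by rewrite xP yP Rxy.
apply: leq_trans (subset_leq_card cover) _.
rewrite mul2n -addnn addnA.
apply: leq_trans (leq_card_setU _ _).1 _; apply: leq_add; last exact: leq_imset_card.
by apply: leq_trans (leq_card_setU _ _).1 _; apply: leq_add; last exact: leq_imset_card.
Qed.

(* Degeneracy: either some nonempty S inside P has minimum R-degree > D
   within S, or P spans at most 2 D |P| ordered adjacent pairs (peel off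
   vertices of degree <= D one at a time). *)
Lemma degeneracy (P : {set Q}) :
  (exists2 S : {set Q}, S \subset P &
     S != set0 /\ forall p, p \in S -> D < #|nbhd_in S p|%:R)
  \/ #|adjacent_pairs P|%:R <= 2 * D * #|P|%:R.
Proof.
have [n] := ubnP #|P|; elim: n P => // n IH P /ltnSE le_Pn.
have [->|[p0 p0P]] := set_0Vmem P.
  right; have -> : adjacent_pairs set0 = set0 by apply/setP => pq; rewrite !inE.
  by rewrite !cards0 mulr0.
have [/existsP [p /andP [pP low]] | all_high] :=
  boolP [exists p in P, #|nbhd_in P p|%:R <= D].
  have lt_Pp_n : (#|P :\ p| < n)%N by rewrite (cardsD1 p P) pP in le_Pn.
  case: (IH _ lt_Pp_n) => [[S sS hS] | few].
    by left; exists S => //; apply: subset_trans sS (subsetDl _ _).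
  right; have := card_adjacent_pairs_del P p.
  rewrite -(ler_nat RR) natrD natrM (cardsD1 p P) pP add1n -addn1 natrD => del.
  by apply: le_trans del _; lra.
left; exists P => //; split; first by apply/set0Pn; exists p0.
by move=> p pP; move/existsPn: all_high => /(_ p); rewrite pP ltNge.
Qed.

End Degeneracy.

Section Links.
Variables (T : finType) (e : rel T).

Definition link (p q c : T * T) : bool :=
  [&& e c.1 c.2, e p.1 c.1, e c.1 q.1, e p.2 c.2 & e c.2 q.2].

Definition vertex_disjoint (S : {set T * T}) : Prop :=
  forall p q, p \in S -> q \in S -> p != q ->
    [&& p.1 != q.1, p.1 != q.2, p.2 != q.1 & p.2 != q.2].

(* A vertex-disjoint family larger than a list L has a member avoiding L:
   each vertex of L meets at most one member. *)
Lemma vertex_disjoint_avoid (S : {set T * T}) (L : seq T) :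
  vertex_disjoint S -> (size L < #|S|)%N ->
  exists2 c, c \in S & (c.1 \notin L) && (c.2 \notin L).
Proof.
move=> disjS ltLS.
pose hit := [set c in S | (c.1 \in L) || (c.2 \in L)].
pose meet (c : T * T) := if c.1 \in L then c.1 else c.2.
have meet_inj : {in hit &, injective meet}.
  move=> p q; rewrite !inE => /andP [pS _] /andP [qS _] mpq.
  apply/eqP; apply/negPn/negP => npq; have := disjS p q pS qS npq.
  by rewrite /meet in mpq; case: ifP mpq => _; case: ifP => _ ->; rewrite !eqxx ?andbF.
have card_hit : (#|hit| <= size L)%N.
  rewrite -(card_in_imset meet_inj); apply: leq_trans (card_size L).
  apply/subset_leq_card/subsetP => x /imsetP [c]; rewrite inE /meet.
  by case/andP => _ inL ->; case: ifP inL.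
have /subsetPn [c cS] : ~~ (S \subset hit).
  apply/negP => /subset_leq_card leSh.
  by move: (leq_ltn_trans (leq_trans leSh card_hit) ltLS); rewrite ltnn.
by rewrite inE cS /= negb_or => avoid; exists c.
Qed.

Hypothesis e_irr : irreflexive e.
Variables (l : nat) (linkable : rel (T * T)).
Hypothesis linkableP : forall p q, linkable p q -> exists2 S : {set T * T},
  (4 * l <= #|S|)%N & (forall c, c \in S -> link p q c) /\ vertex_disjoint S.

(* Greedy choice of links along a path of linkable pairs: consecutive pairs
   are joined by links avoiding a given list L0 and each other, as long as
   fewer than 4l vertices are to be avoided at each step. *)
Lemma choose_links (p0 : T * T) (ps : seq (T * T)) (L0 : seq T) :
  path linkable p0 ps -> uniq L0 -> (size L0 + 2 * size ps < 4 * l + 2)%N ->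
  exists cs : seq (T * T), [/\ size cs = size ps,
    forall j, (j < size ps)%N ->
      link (nth p0 (p0 :: ps) j) (nth p0 ps j) (nth p0 cs j)
    & uniq (L0 ++ map fst cs ++ map snd cs)].
Proof.
elim: ps p0 => [|q ps IH] p0 /=.
  by move=> _ uL0 _; exists [::]; rewrite cats0.
move=> /andP [lk_p0q pth] uL0 small.
have [|cs [size_cs links_cs uniq_cs]] := IH q pth uL0; first by lia.
set used := L0 ++ _ in uniq_cs.
have [S bigS [linkS disjS]] := linkableP lk_p0q.
have [|c cS /andP [c1_new c2_new]] := vertex_disjoint_avoid (L := used) disjS.
  by rewrite !size_cat !size_map size_cs; lia.
exists (c :: cs); split => /=; first by rewrite size_cs.
  case=> [|j] lt_j /=; first exact: linkS.
  rewrite [nth p0 (q :: ps) j](set_nth_default q) /=; last by lia.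
  rewrite [nth p0 ps j](set_nth_default q) // [nth p0 cs j](set_nth_default q).
    exact: links_cs.
  by rewrite size_cs.
have /perm_uniq -> : perm_eq (L0 ++ (c.1 :: map fst cs) ++ c.2 :: map snd cs)
                             (c.1 :: c.2 :: used).
  by apply/permP => a; rewrite /used /= !count_cat /= !count_cat /=; lia.
have /and5P [c_edge _ _ _ _] := linkS c cS.
rewrite /= inE negb_or c1_new c2_new uniq_cs !andbT.
by apply: contraTneq c_edge => ->; rewrite e_irr.
Qed.

End Links.

Lemma perm_ladder_lists (T : eqType) (x y : T) (r r' c c' : seq T) :
  perm_eq ((x :: y :: r ++ r') ++ c ++ c') ((x :: r ++ c) ++ (y :: r' ++ c')).
Proof. by apply/permP => a; rewrite /= !count_cat /= !count_cat; lia. Qed.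

Section Ladder.
Variables (T : finType) (e : rel T) (l : nat).
Hypotheses (e_sym : symmetric e) (l_gt0 : (0 < l)%N).

(* A rim of the prism is the 2l-cycle x, r_0, c_0, r_1, c_1, ..., r_{l-1}
   read off the list x :: r ++ c; rim_pos i is the position in that list of
   the i-th vertex of the cycle. *)
Definition rim_pos (i : nat) : nat :=
  if odd i then (i./2).+1 else if i == 0%N then 0%N else (l + i./2)%N.

Lemma rim_index_cases i : (i < 2 * l)%N ->
  [\/ i = 0%N, exists2 j, (j < l)%N & i = j.*2.+1
    | exists2 j, (j < l.-1)%N & i = j.*2.+2].
Proof.
move=> lt_i; have := odd_double_half i.
case: (odd i) => /= i_eq; first by apply: Or32; exists i./2; lia.
case: i./2 i_eq => [|j] i_eq; first by apply: Or31; lia.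
by apply: Or33; exists j; lia.
Qed.

Lemma rim_pos0 : rim_pos 0 = 0%N. Proof. by []. Qed.

Lemma rim_pos_odd j : rim_pos j.*2.+1 = j.+1.
Proof. by rewrite /rim_pos /= odd_double uphalf_double. Qed.

Lemma rim_pos_even j : rim_pos j.*2.+2 = (l + j).+1.
Proof. by rewrite /rim_pos /= odd_double half_double addnS. Qed.

Lemma rim_pos_lt i : (i < 2 * l)%N -> (rim_pos i < 2 * l)%N.
Proof.
by case/rim_index_cases => [->|[j lt_j ->]|[j lt_j ->]];
  rewrite ?rim_pos0 ?rim_pos_odd ?rim_pos_even; lia.
Qed.

Lemma rim_pos_inj i j : (i < 2 * l)%N -> (j < 2 * l)%N ->
  rim_pos i = rim_pos j -> i = j.
Proof.
by case/rim_index_cases => [->|[i' lt_i ->]|[i' lt_i ->]];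
  case/rim_index_cases => [->|[j' lt_j ->]|[j' lt_j ->]];
  rewrite ?rim_pos0 ?rim_pos_odd ?rim_pos_even; lia.
Qed.

Lemma nth_rim_rung (x : T) (r c : seq T) j : size r = l -> (j < l)%N ->
  nth x (x :: r ++ c) j.+1 = nth x r j.
Proof. by move=> size_r lt_j; rewrite /= nth_cat size_r lt_j. Qed.

Lemma nth_rim_connector (x : T) (r c : seq T) j : size r = l ->
  nth x (x :: r ++ c) (l + j).+1 = nth x c j.
Proof. by move=> size_r; rewrite /= nth_cat size_r ltnNge leq_addr addKn. Qed.

Lemma rim_cycle (x : T) (r c : seq T) : size r = l ->
  (forall j, (j < l)%N -> e x (nth x r j)) ->
  (forall j, (j < l.-1)%N -> e (nth x r j) (nth x c j) && e (nth x c j) (nth x r j.+1)) ->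
  forall i, (i < 2 * l)%N ->
    e (nth x (x :: r ++ c) (rim_pos i))
      (nth x (x :: r ++ c) (rim_pos ((i.+1) %% (2 * l)))).
Proof.
move=> size_r x_r r_c_r i /rim_index_cases [->|[j lt_j ->]|[j lt_j ->]].
- rewrite modn_small; last by lia.
  by rewrite (rim_pos_odd 0) rim_pos0 nth_rim_rung //; apply: x_r.
- have [lt_j'|ge_j] := ltnP j l.-1.
    rewrite modn_small; last by lia.
    rewrite rim_pos_odd rim_pos_even nth_rim_rung ?nth_rim_connector //.
    by case/andP: (r_c_r j lt_j').
  have -> : (j.*2.+2 %% (2 * l) = 0)%N.
    have -> : (j.*2.+2 = 2 * l)%N by lia.
    exact: modnn.
  by rewrite rim_pos_odd rim_pos0 nth_rim_rung //= e_sym; apply: x_r.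
- rewrite modn_small; last by lia.
  rewrite -[j.*2.+3]/((j.+1).*2.+1) rim_pos_even rim_pos_odd.
  rewrite nth_rim_connector // nth_rim_rung //; last by lia.
  by case/andP: (r_c_r j lt_j).
Qed.

Lemma prism_of_rims (x y : T) (r c r' c' : seq T) :
  size r = l -> size r' = l -> size c = l.-1 -> size c' = l.-1 -> e x y ->
  (forall j, (j < l)%N ->
     [&& e x (nth x r j), e y (nth y r' j) & e (nth x r j) (nth y r' j)]) ->
  (forall j, (j < l.-1)%N ->
     [&& e (nth x r j) (nth x c j) && e (nth x c j) (nth x r j.+1),
         e (nth y r' j) (nth y c' j) && e (nth y c' j) (nth y r' j.+1)
       & e (nth x c j) (nth y c' j)]) ->
  uniq ((x :: r ++ c) ++ (y :: r' ++ c')) ->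
  has_prism e l.
Proof.
set A := x :: r ++ c; set B := y :: r' ++ c'.
move=> size_r size_r' size_c size_c' exy rungs_r conns.
rewrite cat_uniq => /and3P [uA disjAB uB].
have size_A : size A = (2 * l)%N by rewrite /A /= size_cat size_r size_c; lia.
have size_B : size B = (2 * l)%N by rewrite /B /= size_cat size_r' size_c'; lia.
exists (fun i => nth x A (rim_pos i)), (fun i => nth y B (rim_pos i)); split.
- move=> i j lt_i lt_j /eqP; rewrite nth_uniq ?size_A ?rim_pos_lt //.
  by move/eqP; apply: rim_pos_inj.
- move=> i j lt_i lt_j /eqP; rewrite nth_uniq ?size_B ?rim_pos_lt //.
  by move/eqP; apply: rim_pos_inj.
- move=> i j lt_i lt_j; apply: contraNneq disjAB => eq_ab.
  apply/hasP; exists (nth y B (rim_pos j)).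
    by rewrite mem_nth ?size_B ?rim_pos_lt.
  by rewrite -eq_ab mem_nth ?size_A ?rim_pos_lt.
- move=> i /rim_index_cases [->|[j lt_j ->]|[j lt_j ->]] //.
    by rewrite rim_pos_odd !nth_rim_rung //; case/and3P: (rungs_r j lt_j).
  by rewrite rim_pos_even !nth_rim_connector //; case/and3P: (conns j lt_j).
- move=> i lt_i; split; apply: rim_cycle => // j lt_j.
  + by case/and3P: (rungs_r j lt_j).
  + by case/and3P: (conns j lt_j).
  + by case/and3P: (rungs_r j lt_j).
  + by case/and3P: (conns j lt_j).
Qed.

Lemma prism_of_ladder (x y : T) (p0 : T * T) (W cs : seq (T * T)) :
  e x y -> size W = l -> size cs = l.-1 ->
  (forall j, (j < l)%N -> [&& e x (nth p0 W j).1, e y (nth p0 W j).2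
                            & e (nth p0 W j).1 (nth p0 W j).2]) ->
  (forall j, (j < l.-1)%N -> link e (nth p0 W j) (nth p0 W j.+1) (nth p0 cs j)) ->
  uniq ((x :: map fst W ++ map fst cs) ++ (y :: map snd W ++ map snd cs)) ->
  has_prism e l.
Proof.
move=> exy size_W size_cs rungs links.
apply: prism_of_rims; rewrite ?size_map // => j lt_j.
  by rewrite !(nth_map p0) ?size_W //; apply: rungs.
have lt_j1 : (j.+1 < size W)%N by rewrite size_W; lia.
rewrite !(nth_map p0) ?size_cs // ?(ltnW lt_j1) //.
by case/and5P: (links j lt_j) => -> -> -> -> ->.
Qed.

End Ladder.

Section GoodPairs.
Variables (T : finType) (e : rel T) (l : nat) (u v : T) (N : RR).
Hypotheses (e_sym : symmetric e) (e_irr : irreflexive e) (N_ge0 : 0 <= N).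

(* The candidate halves (w,z) of a counted 4-tuple around the edge uv: an
   edge wz with w ~ v, z ~ u, w != u, z != v and d(u,w), d(v,z) <= N. *)
Definition good_pair (q : T * T) : bool :=
  [&& e v q.1, e u q.2 & e q.1 q.2] &&
  [&& q.1 != u, q.2 != v, (codeg e u q.1)%:R <= N & (codeg e v q.2)%:R <= N].

Definition good_pairs : {set T * T} := [set q | good_pair q].

(* Good pairs with a given first vertex t have second vertex in N(u) and
   N(t), so there are at most d(u,t) <= N of them; symmetrically for a
   given second vertex. *)
Lemma card_good_pairs_fst (t : T) : #|[set q in good_pairs | q.1 == t]|%:R <= N.
Proof.
have [->|[q0]] := set_0Vmem [set q in good_pairs | q.1 == t]; first by rewrite cards0.
rewrite !inE => /andP [/andP [_ /and4P [_ _ small _]] /eqP <-].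
apply: le_trans small; rewrite ler_nat; apply: leq_trans (leq_imset_card (pair q0.1) _).
apply/subset_leq_card/subsetP => -[x y]; rewrite !inE /=.
move=> /andP [/andP [/and3P [_ uy xy] _] /eqP <-].
by apply/imsetP; exists y; rewrite // inE; apply/andP.
Qed.

Lemma card_good_pairs_snd (t : T) : #|[set q in good_pairs | q.2 == t]|%:R <= N.
Proof.
have [->|[q0]] := set_0Vmem [set q in good_pairs | q.2 == t]; first by rewrite cards0.
rewrite !inE => /andP [/andP [_ /and4P [_ _ _ small]] /eqP <-].
apply: le_trans small; rewrite ler_nat; apply: leq_trans (leq_imset_card (pair^~ q0.2) _).
apply/subset_leq_card/subsetP => -[x y]; rewrite !inE /=.
move=> /andP [/andP [/and3P [vx _ xy] _] /eqP <-].
by apply/imsetP; exists x; rewrite // inE vx e_sym.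
Qed.

(* Grouping by first vertex, a neighbour of v: at most deg(v) N good pairs. *)
Lemma card_good_pairs : #|good_pairs|%:R <= (deg e v)%:R * N.
Proof.
have -> : #|good_pairs| = (\sum_(t in [set y | e v y]) #|[set q in good_pairs | q.1 == t]|)%N.
  rewrite -sum1_card (partition_big fst (mem [set y | e v y])) /=; last first.
    by move=> q; rewrite !inE => /andP [/and3P []].
  by apply: eq_bigr => t _; rewrite -sum1_card; apply: eq_bigl => q; rewrite !inE.
rewrite natr_sum; apply: le_trans (ler_sum _ (fun t _ => card_good_pairs_fst t)) _.
by rewrite sumr_const mulr_natl.
Qed.

Definition blocked (W : seq (T * T)) : {set T * T} :=
  [set q in good_pairs | (q.1 \in map fst W) || (q.2 \in map snd W)].

Lemma card_blocked (W : seq (T * T)) : #|blocked W|%:R <= 2 * (size W)%:R * N.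
Proof.
elim: W => [|p W IH].
  have -> : blocked [::] = set0 by apply/setP => q; rewrite !inE andbF.
  by rewrite cards0 mulr0 mul0r.
have cover : blocked (p :: W) \subset
  ([set q in good_pairs | q.1 == p.1] :|: [set q in good_pairs | q.2 == p.2]) :|: blocked W.
  apply/subsetP => q; rewrite !inE => /andP [-> /=].
  by case: (q.1 == p.1); case: (q.2 == p.2); rewrite /= ?orbT.
have := leq_trans (subset_leq_card cover) (leq_card_setU _ _).1.
move=> /(leq_trans)/(_ (leq_add (leq_card_setU _ _).1 (leqnn _))).
rewrite -(ler_nat RR) !natrD => card_cover; apply: le_trans card_cover _.
have := card_good_pairs_fst p.1; have := card_good_pairs_snd p.2.
by rewrite /= -addn1 natrD; lra.
Qed.

Definition rich_link (p q : T * T) : bool :=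
  rich e l p.1 p.2 q.1 q.2 || rich e l q.1 q.2 p.1 p.2.

Lemma rich_link_sym : symmetric rich_link.
Proof. by move=> p q; rewrite /rich_link orbC. Qed.

Lemma rich_linkP (p q : T * T) : rich_link p q -> exists2 S : {set T * T},
  (4 * l <= #|S|)%N & (forall c, c \in S -> link e p q c) /\ vertex_disjoint S.
Proof.
have richP w z w' z' : rich e l w z w' z' -> exists2 S : {set T * T},
    (4 * l <= #|S|)%N & (forall c, c \in S -> link e (w, z) (w', z') c) /\ vertex_disjoint S.
  case/and4P => _ _ _ /existsP [S /and3P [bigS /forallP linkS /forallP disjS]].
  exists S => //; split=> [c cS | p' q' p'S q'S].
    by move/implyP: (linkS c); apply.
  by move/implyP: (disjS p') => /(_ p'S) /forallP /(_ q') /implyP /(_ q'S) /implyP.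
case: p q => [w z] [w' z'] /orP [/richP // | /richP [S bigS [linkS disjS]]].
exists S => //; split=> // c /linkS /and5P [c12 w'c c1w z'c c2z].
by apply/and5P; split; rewrite // e_sym.
Qed.

Variable f : T -> bool.
Hypotheses (f_bip : forall x y, e x y -> f x != f y) (e_uv : e u v) (l_ge2 : (2 <= l)%N).

(* Good pairs with distinct first and distinct second vertices, together
   with v and u, use distinct vertices: first vertices are neighbours of v,
   second ones neighbours of u, and those lie on opposite sides of the
   bipartition. *)
Lemma good_pairs_uniq (W : seq (T * T)) : {subset W <= good_pairs} ->
  uniq (map fst W) -> uniq (map snd W) -> uniq (v :: u :: map fst W ++ map snd W).
Proof.
move=> W_good uniq1 uniq2.
have fstP x : x \in map fst W -> e v x && (x != u).
  case/mapP => q /W_good; rewrite inE => /andP [/and3P [vq _ _] /and4P [qu _ _ _]] ->.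
  by rewrite vq qu.
have sndP y : y \in map snd W -> e u y && (y != v).
  case/mapP => q /W_good; rewrite inE => /andP [/and3P [_ uq _] /and4P [_ qv _ _]] ->.
  by rewrite uq qv.
rewrite /= cat_uniq uniq1 uniq2 !inE !mem_cat !negb_or andbT /=.
apply/and3P; split.
- apply/and3P; split; first by apply: contraTneq e_uv => ->; rewrite e_irr.
    by apply/negP => /fstP; rewrite e_irr.
  by apply/negP => /sndP; rewrite eqxx andbF.
- apply/andP; split; first by apply/negP => /fstP; rewrite eqxx andbF.
  by apply/negP => /sndP; rewrite e_irr.
- apply/hasPn => y /sndP /andP [uy _]; apply/negP => /fstP /andP [vy _].
  by move: (f_bip uy) (f_bip vy) (f_bip e_uv); case: (f u); case: (f v); case: (f y).
Qed.

(* In a nonempty set S of good pairs in which every pair is rich-linked to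
   more than 2lN others, walk a path of l pairs with distinct first and
   distinct second vertices: a pair sharing a vertex with the k < l pairs
   already chosen is one of at most 2kN blocked pairs. *)
Lemma dense_path (S : {set T * T}) (k : nat) :
  S \subset good_pairs -> S != set0 ->
  (forall p, p \in S -> 2 * l%:R * N < #|nbhd_in rich_link S p|%:R) ->
  (k < l)%N ->
  exists p s, [/\ {subset p :: s <= S}, path rich_link p s, size s = k &
                  uniq (map fst (p :: s)) && uniq (map snd (p :: s))].
Proof.
move=> S_good /set0Pn [p0 p0S] dense; elim: k => [|k IH] lt_k.
  by exists p0, [::]; split => // q; rewrite inE => /eqP ->.
have [p [s [sub_S pth size_s /andP [uniq1 uniq2]]]] := IH (ltnW lt_k).
have pS : p \in S by apply: sub_S; rewrite inE eqxx.
have /subsetPn [q] : ~~ (nbhd_in rich_link S p \subset blocked (p :: s)).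
  apply/negP => /subset_leq_card; rewrite -(ler_nat RR) => few.
  have : 2 * (size (p :: s))%:R * N <= 2 * l%:R * N.
    by rewrite ler_wpM2r // ler_wpM2l // ler_nat /= size_s ltnW.
  have := le_trans few (card_blocked (p :: s)); have := dense p pS; lra.
rewrite inE => /andP [qS pq]; rewrite inE (subsetP S_good q qS) /= negb_or.
case/andP => new1 new2; exists q, (p :: s); split => //=.
- by move=> r; rewrite inE => /predU1P [->|/sub_S].
- by rewrite rich_link_sym pq.
- by rewrite size_s.
- by move: new1 new2 uniq1 uniq2 => /= -> -> -> ->.
Qed.

(* Such a dense set yields a copy of C_{2l}^square: the path gives the rungs
   next to uv, and choose_links supplies the connectors. *)
Lemma dense_prism (S : {set T * T}) :
  S \subset good_pairs -> S != set0 ->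
  (forall p, p \in S -> 2 * l%:R * N < #|nbhd_in rich_link S p|%:R) ->
  has_prism e l.
Proof.
move=> S_good S_nonempty dense.
have [|p [s [sub_S pth size_s /andP [uniq1 uniq2]]]] :=
  dense_path S_good S_nonempty dense (k := l.-1); first by lia.
have W_good : {subset p :: s <= good_pairs} by move=> q /sub_S /(subsetP S_good).
have uniq_L0 := good_pairs_uniq W_good uniq1 uniq2.
have [|cs [size_cs links uniq_all]] := choose_links e_irr rich_linkP pth uniq_L0.
  by rewrite /= size_cat /= !size_map size_s; lia.
have e_vu : e v u by rewrite e_sym.
apply: (prism_of_ladder e_sym _ (p0 := p) (W := p :: s) (cs := cs) e_vu); first by lia.
- by rewrite /= size_s; lia.
- by rewrite size_cs size_s.
- move=> j lt_j; have : nth p (p :: s) j \in good_pairs.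
    by apply: W_good; rewrite mem_nth //= size_s; lia.
  by rewrite inE => /andP [].
- by move=> j lt_j; apply: links; rewrite size_s.
- by rewrite -(perm_uniq (perm_ladder_lists _ _ _ _ _ _)).
Qed.

End GoodPairs.

Lemma card_box_le (T : finType) (B : {set T * T * T * T}) (A1 A2 A3 A4 : {set T})
    (b1 b2 b3 b4 : RR) :
  B \subset setX (setX (setX A1 A2) A3) A4 ->
  #|A1|%:R <= b1 -> #|A2|%:R <= b2 -> #|A3|%:R <= b3 -> #|A4|%:R <= b4 ->
  #|B|%:R <= b1 * b2 * b3 * b4.
Proof.
move=> /subset_leq_card; rewrite !cardsX -(ler_nat RR) !natrM => le_B h1 h2 h3 h4.
apply: le_trans le_B _.
have n_ge0 n : 0 <= n%:R :> RR := ler0n _ n.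
apply: ler_pM (h4); rewrite ?n_ge0 ?mulr_ge0 //.
apply: ler_pM (h3); rewrite ?n_ge0 ?mulr_ge0 //.
exact: ler_pM.
Qed.

(* d(x,x) = deg x: this is how a degenerate tuple bounds a degree. *)
Lemma codeg_self (T : finType) (e : rel T) (x : T) : codeg e x x = deg e x.
Proof. by apply: eq_card => y; rewrite !inE andbb. Qed.

Section Counting.
Variables (T : finType) (e : rel T) (l : nat) (C0 D : RR) (u v : T).
Hypothesis deg_le : forall x, (deg e x)%:R <= D.
Local Notation N := (C0 * Num.sqrt (avg_deg e)).
Hypothesis N_ge0 : 0 <= N.
Local Notation counted := (counted_tuples e l C0 u v).

Lemma countedP w z w' z' : (w, z, w', z') \in counted ->
  [/\ rich e l w z w' z', [&& e u z, e u z', e v w & e v w'],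
      (codeg e u w)%:R <= N, (codeg e u w')%:R <= N &
      ((codeg e v z)%:R <= N) && ((codeg e v z')%:R <= N)].
Proof.
rewrite inE /= => /and5P [r uz uz' vw /and5P [vw' c1 c2 c3 c4]].
by rewrite uz uz' vw vw' c3 c4.
Qed.

Definition small_nbhd (x : T) : {set T} := [set y | e x y & (deg e x)%:R <= N].

Lemma card_small_nbhd x : #|small_nbhd x|%:R <= N.
Proof.
have [->|[y]] := set_0Vmem (small_nbhd x); first by rewrite cards0.
rewrite inE => /andP [_ small]; apply: le_trans small.
by rewrite ler_nat; apply/subset_leq_card/subsetP => z; rewrite !inE => /andP [].
Qed.

(* If, say, w = u then deg(u) = d(u,u) <= N, so z and z' range over a set
   of size N and w' over N(v); hence each kind numbers at most N^2 D. *)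
Lemma card_counted_w : #|[set t in counted | t.1.1.1 == u]|%:R <= 1 * N * D * N.
Proof.
apply: (card_box_le (A1 := [set u]) (A2 := small_nbhd u) (A3 := [set y | e v y])
                    (A4 := small_nbhd u) _ _ _ (deg_le v));
  rewrite ?cards1 ?card_small_nbhd //.
apply/subsetP => -[[[w z] w'] z']; rewrite inE => /andP [/countedP [_ adj c _ _] /eqP /= wu].
by move: adj c; rewrite !inE /= wu codeg_self eqxx => /and4P [-> -> _ ->] ->.
Qed.

Lemma card_counted_w' : #|[set t in counted | t.1.2 == u]|%:R <= D * N * 1 * N.
Proof.
apply: (card_box_le (A1 := [set y | e v y]) (A2 := small_nbhd u) (A3 := [set u])
                    (A4 := small_nbhd u) _ (deg_le v)); rewrite ?cards1 ?card_small_nbhd //.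
apply/subsetP => -[[[w z] w'] z']; rewrite inE => /andP [/countedP [_ adj _ c _] /eqP /= wu].
by move: adj c; rewrite !inE /= wu codeg_self eqxx => /and4P [-> -> -> _] ->.
Qed.

Lemma card_counted_z : #|[set t in counted | t.1.1.2 == v]|%:R <= N * 1 * N * D.
Proof.
apply: (card_box_le (A1 := small_nbhd v) (A2 := [set v]) (A3 := small_nbhd v)
                    (A4 := [set y | e u y]) _ _ _ _ (deg_le u));
  rewrite ?cards1 ?card_small_nbhd //.
apply/subsetP => -[[[w z] w'] z']; rewrite inE => /andP [/countedP [_ adj _ _ c] /eqP /= zv].
move: adj c; rewrite !inE /= zv codeg_self eqxx => /and4P [_ -> -> ->] /andP [-> _].
by [].
Qed.

Lemma card_counted_z' : #|[set t in counted | t.2 == v]|%:R <= N * D * N * 1.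
Proof.
apply: (card_box_le (A1 := small_nbhd v) (A2 := [set y | e u y]) (A3 := small_nbhd v)
                    (A4 := [set v]) _ _ (deg_le u)); rewrite ?cards1 ?card_small_nbhd //.
apply/subsetP => -[[[w z] w'] z']; rewrite inE => /andP [/countedP [_ adj _ _ c] /eqP /= zv].
move: adj c; rewrite !inE /= zv codeg_self eqxx => /and4P [-> _ -> ->] /andP [_ ->].
by [].
Qed.

Hypotheses (e_sym : symmetric e) (e_irr : irreflexive e).
Variable f : T -> bool.
Hypotheses (f_bip : forall x y, e x y -> f x != f y) (e_uv : e u v) (l_ge2 : (2 <= l)%N).

Definition quad (pq : (T * T) * (T * T)) : T * T * T * T :=
  (pq.1.1, pq.1.2, pq.2.1, pq.2.2).

Lemma counted_cover :
  counted \subset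
    ([set t in counted | t.1.1.1 == u] :|: [set t in counted | t.1.2 == u]) :|:
    ([set t in counted | t.1.1.2 == v] :|: [set t in counted | t.2 == v]) :|:
    quad @: adjacent_pairs (rich_link e l) (good_pairs e u v N).
Proof.
apply/subsetP => -[[[w z] w'] z'] t_in; have t_in' := t_in.
rewrite !inE /= in t_in'; rewrite !inE /= t_in' /=.
have [//|wu] := eqVneq w u; have [//|w'u] := eqVneq w' u.
have [//|zv] := eqVneq z v; have [//|z'v] := eqVneq z' v.
apply/imsetP; exists ((w, z), (w', z')) => //.
have [r /and4P [uz uz' vw vw'] cw cw' /andP [cz cz']] := countedP t_in.
case/and4P: (r) => _ wz w'z' _.
by rewrite !inE /= /good_pair /= vw uz wz wu zv cw cz vw' uz' w'z' w'u z'v cw' cz' /rich_link r.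
Qed.

(* Few rich links among good pairs: otherwise the degeneracy lemma gives a
   dense set of good pairs and hence a copy of C_{2l}^square. *)
Lemma card_rich_links : ~ has_prism e l ->
  #|adjacent_pairs (rich_link e l) (good_pairs e u v N)|%:R <= 4 * l%:R * (N * N * D).
Proof.
move=> no_prism.
have [[S S_good [S_nonempty dense]] | few] :=
  degeneracy (2 * l%:R * N) (rich_link_sym e l) (good_pairs e u v N).
  by case: no_prism; apply: (dense_prism e_sym e_irr N_ge0 f_bip e_uv l_ge2 S_good S_nonempty).
have few_good : #|good_pairs e u v N|%:R <= D * N.
  exact: le_trans (card_good_pairs e u v N_ge0) (ler_wpM2r N_ge0 (deg_le v)).
have coef_ge0 : 0 <= 2 * (2 * l%:R * N).
  by apply: mulr_ge0; [lra | apply: mulr_ge0 N_ge0; apply: mulr_ge0; [lra | exact: ler0n]].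
have -> : 4 * l%:R * (N * N * D) = 2 * (2 * l%:R * N) * (D * N) by ring.
exact: le_trans few (ler_wpM2l coef_ge0 few_good).
Qed.

Lemma card_counted : ~ has_prism e l ->
  #|counted|%:R <= (4 + 4 * l%:R) * (N * N * D).
Proof.
move=> no_prism.
have le_cover : (#|counted| <=
    #|[set t in counted | t.1.1.1 == u]| + #|[set t in counted | t.1.2 == u]| +
    (#|[set t in counted | t.1.1.2 == v]| + #|[set t in counted | t.2 == v]|) +
    #|adjacent_pairs (rich_link e l) (good_pairs e u v N)|)%N.
  apply: leq_trans (subset_leq_card counted_cover) _.
  apply: leq_trans (leq_card_setU _ _).1 _; apply: leq_add; last exact: leq_imset_card.
  apply: leq_trans (leq_card_setU _ _).1 _.
  by apply: leq_add; apply: (leq_card_setU _ _).1.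
move: le_cover; rewrite -(ler_nat RR) !natrD => le_cover.
have := card_rich_links no_prism.
have := card_counted_w; have := card_counted_w'.
have := card_counted_z; have := card_counted_z'.
by rewrite !mul1r !mulr1; lra.
Qed.

End Counting.

Unset Implicit Arguments. Set Strict Implicit.

Theorem lemma5p6 (l : nat) (K C0 : Rdefinitions.R) :
  (2 <= l)%N -> 1 <= K -> 0 < C0 ->
  exists M : Rdefinitions.R,
    forall (T : finType) (e : rel T),
      simple_graph e -> bipartite e -> ~ has_prism e l ->
      C0 * Num.sqrt ((#|T|)%:R) <= avg_deg e ->
      (forall x : T, (deg e x)%:R <= K * avg_deg e) ->
      forall u v : T, e u v ->
        (#|counted_tuples e l C0 u v|)%:R <= M * (avg_deg e) ^+ 2.
Proof.
(* M = (4 + 4l) K C0^2, from card_counted with D = K d and N^2 = C0^2 d. *)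
move=> l_ge2 _ C0_gt0; exists ((4 + 4 * l%:R) * (K * C0 ^+ 2)).
move=> T e [e_sym e_irr] [f f_bip] no_prism large_avg deg_le u v e_uv.
have d_ge0 : 0 <= avg_deg e.
  by apply: le_trans large_avg; rewrite mulr_ge0 ?sqrtr_ge0 ?ltW.
have N_ge0 : 0 <= C0 * Num.sqrt (avg_deg e) by rewrite mulr_ge0 ?sqrtr_ge0 ?ltW.
apply: le_trans (card_counted deg_le N_ge0 e_sym e_irr f_bip e_uv l_ge2 no_prism) _.
suff -> : (4 + 4 * l%:R) * (K * C0 ^+ 2) * avg_deg e ^+ 2 =
          (4 + 4 * l%:R) * (C0 * Num.sqrt (avg_deg e) * (C0 * Num.sqrt (avg_deg e))
                            * (K * avg_deg e)) by [].
have := sqr_sqrtr d_ge0; move: (Num.sqrt _) => s <-.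
by ring.
Qed.
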